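(* Assume the setting and algorithm described in the context. If $0<\alpha\le\frac{\sqrt n}{\sqrt{8m}\,L}$, then for all $k\ge0$, almost surely, $$\mathbb E\big[t^{k+1}\,|\,\mathcal F^k\big]\le\Big(1-\frac1{4m}\Big)t^k+4m\alpha^2\|\overline{\nabla\mathbf f}(x^k)\|^2+\frac{9}{4mn}\|x^k-Jx^k\|^2 .$$
   Context: Setting. Let $n,m,p\ge1$ be integers and $\mathcal V=\{1,\dots,n\}$. For each $i\in\mathcal V$ and $j\in\{1,\dots,m\}$, $f_{i,j}:\mathbb R^p\to\mathbb R$ is differentiable and $L$-smooth for some $L>0$, i.e. $\|\nabla f_{i,j}(x)-\nabla f_{i,j}(y)\|\le L\|x-y\|$ for all $x,y\in\mathbb R^p$. Let $f_i:=\frac1m\sum_{j=1}^m f_{i,j}$ and $F:=\frac1n\sum_{i=1}^n f_i$, and assume $F^*:=\inf_{x\in\mathbb R^p}F(x)>-\infty$. Let $\underline W=(\underline w_{ir})\in\mathbb R^{n\times n}$ be a nonnegative, primitive, doubly stochastic matrix ($\underline W\mathbf 1_n=\mathbf 1_n$, $\mathbf 1_n^\top\underline W=\mathbf 1_n^\top$), and let $\lambda\in[0,1)$ be its second largest singular value. Any expression with $\lambda$ in a denominator is read as $+\infty$ when $\lambda=0$. Algorithm GT-SAGA with step-size $\alpha>0$: fix a deterministic $\bar x^0\in\mathbb R^p$; for all $i\in\mathcal V$ set $x_i^0=\bar x^0$, $z_{i,j}^0=x_i^0$ for all $j$, $y_i^0=0$, $g_i^{-1}=0$. For $k=0,1,2,\dots$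 and every $i\in\mathcal V$: draw $\tau_i^k$ uniformly from $\{1,\dots,m\}$; set $g_i^k=\nabla f_{i,\tau_i^k}(x_i^k)-\nabla f_{i,\tau_i^k}(z_{i,\tau_i^k}^k)+\frac1m\sum_{j=1}^m\nabla f_{i,j}(z_{i,j}^k)$; set $y_i^{k+1}=\sum_{r=1}^n\underline w_{ir}(y_r^k+g_r^k-g_r^{k-1})$; set $x_i^{k+1}=\sum_{r=1}^n\underline w_{ir}(x_r^k-\alpha y_r^{k+1})$; draw $s_i^k$ uniformly from $\{1,\dots,m\}$; set $z_{i,j}^{k+1}=x_i^k$ if $j=s_i^k$ and $z_{i,j}^{k+1}=z_{i,j}^k$ otherwise. The family $\{\tau_i^k,s_i^k: i\in\mathcal V,k\ge0\}$ is independent. Notation. $x^k,y^k,g^k\in\mathbb R^{np}$ stack the $x_i^k$, $y_i^k$, $g_i^k$; $\nabla\mathbf f(x^k)\in\mathbb R^{np}$ stacks $\nabla f_i(x_i^k)$, $i=1,\dots,n$; $W=\underline W\otimes I_p$, $J=(\frac1n\mathbf 1_n\mathbf 1_n^\top)\otimes I_p$; $\bar x^k=\frac1n\sum_i x_i^k$, $\bar g^k=\frac1n\sum_i g_i^k$, $\overline{\nabla\mathbf f}(x^k)=\frac1n\sum_i\nabla f_i(x_i^k)$. $\mathcal F^0$ is the trivial $\sigma$-algebra and $\mathcal F^k=\sigma(\{\tau_i^t,s_i^t:i\in\mathcal V,\ t\le k-1\})$ for $k\ge1$. $t^k:=\frac1n\sum_{i=1}^n\frac1m\sum_{j=1}^m\|\bar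 x^k-z_{i,j}^k\|^2$. $\|\nabla\mathbf f(x^0)\|^2:=\sum_{i=1}^n\|\nabla f_i(\bar x^0)\|^2$. Norms are Euclidean (spectral for matrices); vector and matrix inequalities are entrywise. *)

From HB Require Import structures.
From mathcomp Require Import all_boot all_order all_algebra.
From mathcomp Require Import all_classical all_reals.
From mathcomp Require Import topology normedtype derive.
Set Implicit Arguments. Unset Strict Implicit. Unset Printing Implicit Defensive.
Import Order.TTheory GRing.Theory Num.Theory.
Local Open Scope ring_scope.

Section GTSAGA.
Variables (R : realType) (n m p : nat).

Definition sqn (v : 'rV[R]_p) : R := \sum_(l < p) (v 0 l) ^+ 2.
Definition enorm (v : 'rV[R]_p) : R := Num.sqrt (sqn v).

(* one draw per node: (tau_i^k, s_i^k) *)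
Definition draw := {ffun 'I_n -> 'I_m * 'I_m}.

Record state := State {
  st_x : 'I_n -> 'rV[R]_p;
  st_y : 'I_n -> 'rV[R]_p;
  st_gprev : 'I_n -> 'rV[R]_p;
  st_z : 'I_n -> 'I_m -> 'rV[R]_p
}.

Variables (gradf : 'I_n -> 'I_m -> 'rV[R]_p -> 'rV[R]_p)
          (W : 'M[R]_n) (alpha : R) (x0 : 'rV[R]_p).

Definition grad_fi (i : 'I_n) (x : 'rV[R]_p) : 'rV[R]_p :=
  (m%:R)^-1 *: \sum_(j < m) gradf i j x.

Definition saga_g (s : state) (d : draw) (i : 'I_n) : 'rV[R]_p :=
  gradf i (d i).1 (st_x s i) - gradf i (d i).1 (st_z s i (d i).1)
  + (m%:R)^-1 *: \sum_(j < m) gradf i j (st_z s i j).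

Definition step (s : state) (d : draw) : state :=
  let g := saga_g s d in
  let y' := fun i => \sum_(r < n) W i r *: (st_y s r + g r - st_gprev s r) in
  let x' := fun i => \sum_(r < n) W i r *: (st_x s r - alpha *: y' r) in
  let z' := fun i j => if j == (d i).2 then st_x s i else st_z s i j in
  State x' y' g z'.

Definition init : state :=
  State (fun _ => x0) (fun _ => 0) (fun _ => 0) (fun _ _ => x0).

Definition Omega (K : nat) := {ffun 'I_K -> draw}.

Definition run (K : nat) (omega : Omega K) (k : nat) : state :=
  foldl step init (take k [seq omega t | t <- enum 'I_K]).

Definition xbar (s : state) : 'rV[R]_p := (n%:R)^-1 *: \sum_(i < n) st_x s i.

Definition tk (s : state) : R :=
  (n%:R)^-1 * \sum_(i < n) ((m%:R)^-1 * \sum_(j < m) sqn (xbar s - st_z s i j)).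

(* || x^k - J x^k ||^2 *)
Definition consensus_err (s : state) : R := \sum_(i < n) sqn (st_x s i - xbar s).

Definition avg_grad_sq (s : state) : R :=
  sqn ((n%:R)^-1 *: \sum_(i < n) grad_fi i (st_x s i)).

End GTSAGA.

(* Probability on Omega K: the draws (tau_i^t, s_i^t), t < K, are independent
   and uniform on {1..m} ~ 'I_m, i.e. the law is uniform on the finite set Omega K. *)
Section Prob.
Variables (R : realType) (T : finType).
Definition expect (X : T -> R) : R := (#|T|%:R)^-1 * \sum_(w : T) X w.
End Prob.

(* F^k on Omega K: sigma-algebra generated by the draws of rounds t < k.
   A function is F^k-measurable iff it depends only on these coordinates. *)
Definition Fk_meas {D : Type} {K : nat} (T : Type) (k : nat)
    (Y : {ffun 'I_K -> D} -> T) : Prop :=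
  forall w w' : {ffun 'I_K -> D},
    (forall t : 'I_K, (t < k)%N -> w t = w' t) -> Y w = Y w'.

Definition is_cond_exp (R : realType) (D : finType) (K k : nat)
    (X Y : {ffun 'I_K -> D} -> R) : Prop :=
  Fk_meas k Y /\
  forall A : {ffun 'I_K -> D} -> bool, Fk_meas k A ->
    expect (fun w => X w * (A w)%:R) = expect (fun w => Y w * (A w)%:R).

From HB Require Import structures.
From mathcomp Require Import all_boot all_order all_algebra.
From mathcomp Require Import all_classical all_reals.
From mathcomp Require Import topology normedtype derive.
From mathcomp Require Import ring lra.
Set Implicit Arguments. Unset Strict Implicit. Unset Printing Implicit Defensive.
Import Order.TTheory GRing.Theory Num.Theory.
Import numFieldNormedType.Exports.
Local Open Scope ring_scope.

Section FiniteExpectation.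
Variable R : realType.

Lemma card_predT (T : finType) : #|(xpredT : pred T)| = #|T|.
Proof. exact: eq_card. Qed.

Lemma expectE (T : finType) (X : T -> R) : expect X = (#|T|%:R)^-1 * \sum_w X w.
Proof. by []. Qed.

Lemma expect_ext (T : finType) (X Y : T -> R) :
  (forall w, X w = Y w) -> expect X = expect Y.
Proof. by move=> h; rewrite !expectE; congr (_ * _); apply: eq_bigr. Qed.

Lemma expectD (T : finType) (X Y : T -> R) :
  expect (fun w => X w + Y w) = expect X + expect Y.
Proof. by rewrite !expectE big_split mulrDr. Qed.

Lemma expectZ (T : finType) (c : R) (X : T -> R) :
  expect (fun w => c * X w) = c * expect X.
Proof. by rewrite !expectE -mulr_sumr mulrCA. Qed.

Lemma expect_sum (T I : finType) (F : I -> T -> R) :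
  expect (fun w => \sum_i F i w) = \sum_i expect (F i).
Proof. by rewrite expectE exchange_big mulr_sumr. Qed.

Lemma expect_cst (T : finType) (c : R) : (0 < #|T|)%N -> expect (fun _ : T => c) = c.
Proof.
move=> hT; rewrite expectE sumr_const card_predT -[c *+ _]mulr_natl mulrA.
by rewrite mulVf ?mul1r // pnatr_eq0 -lt0n.
Qed.

Lemma expect_le (T : finType) (X Y : T -> R) :
  (forall w, X w <= Y w) -> expect X <= expect Y.
Proof.
move=> h; rewrite !expectE ler_wpM2l ?invr_ge0 ?ler0n //.
by apply: ler_sum => w _; apply: h.
Qed.

Lemma expect_prod (I A : finType) (F : I -> A -> R) :
  expect (fun f : {ffun I -> A} => \prod_i F i (f i)) = \prod_i expect (F i).
Proof.
rewrite expectE -bigA_distr_bigA card_ffun natrX.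
under [RHS]eq_bigr do rewrite expectE.
by rewrite big_split /= prodr_const card_predT exprVn.
Qed.

Lemma expect_coord (I A : finType) (i : I) (h : A -> R) : (0 < #|A|)%N ->
  expect (fun f : {ffun I -> A} => h (f i)) = expect h.
Proof.
move=> hA; pose F i' (a : A) := if i' == i then h a else 1.
have Fo j : j != i -> expect (F j) = 1.
  by move=> /negbTE hj; rewrite (expect_ext (Y := fun _ => 1)) ?expect_cst // /F hj.
transitivity (expect (fun f : {ffun I -> A} => \prod_i' F i' (f i'))).
  apply: expect_ext => f; rewrite (bigD1 i) //= /F eqxx big1 ?mulr1 //.
  by move=> j /negbTE ->.
by rewrite expect_prod (bigD1 i) //= big1 ?mulr1 // /F; apply: expect_ext => a; rewrite eqxx.
Qed.

Lemma expect_coord2 (I A : finType) (i r : I) (h1 h2 : A -> R) :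
  (0 < #|A|)%N -> i != r ->
  expect (fun f : {ffun I -> A} => h1 (f i) * h2 (f r)) = expect h1 * expect h2.
Proof.
move=> hA hir.
pose F i' (a : A) := if i' == i then h1 a else if i' == r then h2 a else 1.
have Fi a : F i a = h1 a by rewrite /F eqxx.
have Fr a : F r a = h2 a by rewrite /F eq_sym (negbTE hir) eqxx.
have Fo j a : (j != i) && (j != r) -> F j a = 1.
  by case/andP=> /negbTE h1' /negbTE h2'; rewrite /F h1' h2'.
have split2 (G : I -> R) :
    \prod_j G j = G i * G r * \prod_(j | (j != i) && (j != r)) G j.
  rewrite (bigD1 i) //= (bigD1 r) /=; last by rewrite eq_sym.
  by rewrite mulrA; congr (_ * _); apply: eq_bigl => j; rewrite andbC.
transitivity (expect (fun f : {ffun I -> A} => \prod_i' F i' (f i'))).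
  apply: expect_ext => f; rewrite split2 Fi Fr big1 ?mulr1 // => j hj.
  exact: Fo.
rewrite expect_prod split2 big1 ?mulr1.
  by congr (_ * _); apply: expect_ext.
by move=> j hj; rewrite (expect_ext (Y := fun _ => 1)) ?expect_cst // => a; apply: Fo.
Qed.

Lemma expect_pair (A B : finType) (h1 : A -> R) (h2 : B -> R) :
  expect (fun ab : A * B => h1 ab.1 * h2 ab.2) = expect h1 * expect h2.
Proof.
rewrite !expectE card_prod natrM invfM -(pair_bigA _ (fun a b => h1 a * h2 b)) /=.
rewrite mulrACA; congr (_ * _); rewrite mulr_suml; apply: eq_bigr => a _.
by rewrite mulr_sumr.
Qed.

Lemma expect_fst (A B : finType) (h : A -> R) : (0 < #|B|)%N ->
  expect (fun ab : A * B => h ab.1) = expect h.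
Proof.
move=> hB; have := expect_pair h (fun _ : B => 1).
by rewrite expect_cst // mulr1 => <-; apply: expect_ext => ab; rewrite mulr1.
Qed.

Lemma expect_snd (A B : finType) (h : B -> R) : (0 < #|A|)%N ->
  expect (fun ab : A * B => h ab.2) = expect h.
Proof.
move=> hA; have := expect_pair (fun _ : A => 1) h.
by rewrite expect_cst // mul1r => <-; apply: expect_ext => ab; rewrite mul1r.
Qed.

End FiniteExpectation.

Section Euclid.
Variables (R : realType) (p : nat).
Implicit Types u v c : 'rV[R]_p.

Definition dot u v : R := \sum_(l < p) u 0 l * v 0 l.

Lemma sqn_dot v : sqn v = dot v v.
Proof. by apply: eq_bigr => l _; rewrite expr2. Qed.

Lemma dotC u v : dot u v = dot v u.
Proof. by apply: eq_bigr => l _; rewrite mulrC. Qed.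

Lemma dotDl u v c : dot (u + v) c = dot u c + dot v c.
Proof. by rewrite /dot -big_split; apply: eq_bigr => l _; rewrite !mxE mulrDl. Qed.

Lemma dotNl u c : dot (- u) c = - dot u c.
Proof. by rewrite /dot -sumrN; apply: eq_bigr => l _; rewrite !mxE mulNr. Qed.

Lemma dotBl u v c : dot (u - v) c = dot u c - dot v c.
Proof. by rewrite dotDl dotNl. Qed.

Lemma dotZl a u c : dot (a *: u) c = a * dot u c.
Proof. by rewrite /dot mulr_sumr; apply: eq_bigr => l _; rewrite !mxE mulrA. Qed.

Lemma dot0l c : dot 0 c = 0.
Proof. by rewrite /dot big1 // => l _; rewrite mxE mul0r. Qed.

Lemma dot_suml (I : finType) (F : I -> 'rV[R]_p) c :
  dot (\sum_i F i) c = \sum_i dot (F i) c.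
Proof.
rewrite /dot exchange_big /=; apply: eq_bigr => l _.
by rewrite summxE mulr_suml.
Qed.

Lemma dotDr u v c : dot c (u + v) = dot c u + dot c v.
Proof. by rewrite !(dotC c) dotDl. Qed.

Lemma dotBr u v c : dot c (u - v) = dot c u - dot c v.
Proof. by rewrite !(dotC c) dotBl. Qed.

Lemma dotZr a u c : dot c (a *: u) = a * dot c u.
Proof. by rewrite !(dotC c) dotZl. Qed.

Lemma dot_sumr (I : finType) (F : I -> 'rV[R]_p) c :
  dot c (\sum_i F i) = \sum_i dot c (F i).
Proof. by rewrite dotC dot_suml; apply: eq_bigr => i _; rewrite dotC. Qed.

Lemma sqn_ge0 v : 0 <= sqn v.
Proof. by apply: sumr_ge0 => l _; apply: sqr_ge0. Qed.

Lemma sqnB u v : sqn (u - v) = sqn u - 2 * dot u v + sqn v.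
Proof. by rewrite !sqn_dot dotBl !dotBr (dotC v u); ring. Qed.

Lemma sqnD u v : sqn (u + v) = sqn u + 2 * dot u v + sqn v.
Proof. by rewrite !sqn_dot dotDl !dotDr (dotC v u); ring. Qed.

Lemma sqnZ a u : sqn (a *: u) = a ^+ 2 * sqn u.
Proof. by rewrite !sqn_dot dotZl dotZr mulrA expr2. Qed.

Lemma sqn_sym u v : sqn (u - v) = sqn (v - u).
Proof. by rewrite !sqnB dotC; ring. Qed.

(* Young's inequality 2<u,v> <= e|u|^2 + |v|^2/e, from |e u - v|^2 >= 0. *)
Lemma young u v e : 0 < e -> 2 * dot u v <= e * sqn u + e^-1 * sqn v.
Proof.
move=> he; have he' : 0 < e^-1 by rewrite invr_gt0.
have h := mulr_ge0 (ltW he') (sqn_ge0 (e *: u - v)).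
have expand : e^-1 * sqn (e *: u - v) = e * sqn u - 2 * dot u v + e^-1 * sqn v.
  by rewrite sqnB sqnZ dotZl; field; rewrite gt_eqF.
by rewrite expand in h; lra.
Qed.

Lemma sqnD_le u v : sqn (u + v) <= 2 * sqn u + 2 * sqn v.
Proof. by have := sqn_ge0 (u - v); rewrite sqnB sqnD; lra. Qed.

Lemma sqn_lipschitz u v L : enorm u <= L * enorm v -> sqn u <= L ^+ 2 * sqn v.
Proof.
move=> h; have h0 : 0 <= enorm u by apply: sqrtr_ge0.
have := ler_pM h0 h0 h h.
by rewrite -!expr2 exprMn /enorm !sqr_sqrtr ?sqn_ge0.
Qed.

Definition EV (T : finType) (h : T -> 'rV[R]_p) : 'rV[R]_p :=
  \row_l expect (fun w => h w 0 l).

Lemma EVE (T : finType) (h : T -> 'rV[R]_p) : EV h = (#|T|%:R)^-1 *: \sum_w h w.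
Proof. by apply/rowP => l; rewrite !mxE summxE expectE. Qed.

Lemma dot_EV (T : finType) (h : T -> 'rV[R]_p) c :
  dot (EV h) c = expect (fun w => dot (h w) c).
Proof.
rewrite /dot expect_sum; apply: eq_bigr => l _.
by rewrite mxE mulrC -expectZ; apply: expect_ext => w; rewrite mulrC.
Qed.

Lemma EV_cst (T : finType) c : (0 < #|T|)%N -> EV (fun _ : T => c) = c.
Proof. by move=> h; apply/rowP => l; rewrite !mxE expect_cst. Qed.

Lemma EVD (T : finType) (h1 h2 : T -> 'rV[R]_p) :
  EV (fun w => h1 w + h2 w) = EV h1 + EV h2.
Proof. by apply/rowP => l; rewrite !mxE -expectD; apply: expect_ext => w; rewrite mxE. Qed.

Lemma EVZ (T : finType) a (h : T -> 'rV[R]_p) : EV (fun w => a *: h w) = a *: EV h.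
Proof. by apply/rowP => l; rewrite !mxE -expectZ; apply: expect_ext => w; rewrite mxE. Qed.

Lemma EV_sum (T I : finType) (F : I -> T -> 'rV[R]_p) :
  EV (fun w => \sum_i F i w) = \sum_i EV (F i).
Proof.
apply/rowP => l; rewrite !mxE summxE.
under eq_bigr do rewrite mxE.
by rewrite -(expect_sum (fun i w => F i w 0 l)); apply: expect_ext => w; rewrite summxE.
Qed.

Lemma EV_coord (I A : finType) (i : I) (h : A -> 'rV[R]_p) : (0 < #|A|)%N ->
  EV (fun f : {ffun I -> A} => h (f i)) = EV h.
Proof. by move=> hA; apply/rowP => l; rewrite !mxE (expect_coord i (fun a => h a 0 l)). Qed.

Lemma EV_fst (A B : finType) (h : A -> 'rV[R]_p) : (0 < #|B|)%N ->
  EV (fun ab : A * B => h ab.1) = EV h.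
Proof. by move=> hB; apply/rowP => l; rewrite !mxE (expect_fst (fun a => h a 0 l)). Qed.

Lemma EV_snd (A B : finType) (h : B -> 'rV[R]_p) : (0 < #|A|)%N ->
  EV (fun ab : A * B => h ab.2) = EV h.
Proof. by move=> hA; apply/rowP => l; rewrite !mxE (expect_snd (fun a => h a 0 l)). Qed.

Lemma expect_sqn_center (T : finType) (h : T -> 'rV[R]_p) : (0 < #|T|)%N ->
  expect (fun w => sqn (h w - EV h)) = expect (fun w => sqn (h w)) - sqn (EV h).
Proof.
move=> hT.
rewrite (expect_ext (Y := fun w => sqn (h w) + (- 2 * dot (h w) (EV h) + sqn (EV h)))).
  by rewrite !expectD expect_cst // expectZ -dot_EV -sqn_dot; ring.
by move=> w; rewrite sqnB; ring.
Qed.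

Lemma variance_le (T : finType) (h : T -> 'rV[R]_p) : (0 < #|T|)%N ->
  expect (fun w => sqn (h w - EV h)) <= expect (fun w => sqn (h w)).
Proof. by move=> hT; rewrite expect_sqn_center // lerBlDr lerDl sqn_ge0. Qed.

Lemma jensen_sqn (T : finType) (h : T -> 'rV[R]_p) : (0 < #|T|)%N ->
  sqn (EV h) <= expect (fun w => sqn (h w)).
Proof.
move=> hT; have := expect_sqn_center h hT.
have : 0 <= expect (fun w => sqn (h w - EV h)).
  by rewrite -(expect_cst 0 hT); apply: expect_le => w; apply: sqn_ge0.
lra.
Qed.

Lemma expect_dot_indep (T : finType) (U V : T -> 'rV[R]_p) :
  (forall l, expect (fun w => U w 0 l * V w 0 l) =
             expect (fun w => U w 0 l) * expect (fun w => V w 0 l)) ->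
  expect (fun w => dot (U w) (V w)) = dot (EV U) (EV V).
Proof. by move=> h; rewrite /dot expect_sum; apply: eq_bigr => l _; rewrite h !mxE. Qed.

Lemma expect_dot_coord2 (I A : finType) (i r : I) (U V : A -> 'rV[R]_p) :
  (0 < #|A|)%N -> i != r ->
  expect (fun f : {ffun I -> A} => dot (U (f i)) (V (f r))) = dot (EV U) (EV V).
Proof.
move=> hA hir; rewrite expect_dot_indep; first by rewrite (EV_coord i U) // (EV_coord r V).
move=> l; rewrite (expect_coord2 (fun a => U a 0 l) (fun a => V a 0 l)) //.
by rewrite (expect_coord i (fun a => U a 0 l)) // (expect_coord r (fun a => V a 0 l)).
Qed.

Lemma expect_dot_pair (A B : finType) (U : A -> 'rV[R]_p) (V : B -> 'rV[R]_p) :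
  (0 < #|A|)%N -> (0 < #|B|)%N ->
  expect (fun ab : A * B => dot (U ab.1) (V ab.2)) = dot (EV U) (EV V).
Proof.
move=> hA hB; rewrite expect_dot_indep; first by rewrite (EV_fst U) // (EV_snd V).
move=> l; rewrite (expect_pair (fun a => U a 0 l) (fun b => V b 0 l)).
by rewrite (expect_fst (fun a => U a 0 l)) // (expect_snd (fun b => V b 0 l)).
Qed.

End Euclid.

Lemma tk_ge0 (R : realType) (n m p : nat) (s : state R n m p) : 0 <= tk s.
Proof.
apply: mulr_ge0; first by rewrite invr_ge0 ler0n.
apply: sumr_ge0 => i _; apply: mulr_ge0; first by rewrite invr_ge0 ler0n.
by apply: sumr_ge0 => j _; apply: sqn_ge0.
Qed.

Lemma consensus_err_ge0 (R : realType) (n m p : nat) (s : state R n m p) :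
  0 <= consensus_err s.
Proof. by apply: sumr_ge0 => i _; apply: sqn_ge0. Qed.

Section GradientTracking.
Variables (R : realType) (n m p : nat).
Variables (gradf : 'I_n -> 'I_m -> 'rV[R]_p -> 'rV[R]_p) (W : 'M[R]_n) (alpha : R).
Hypothesis hWcol : forall r, \sum_(i < n) W i r = 1.

Lemma sum_mix (v : 'I_n -> 'rV[R]_p) : \sum_i \sum_r W i r *: v r = \sum_r v r.
Proof.
rewrite exchange_big /=; apply: eq_bigr => r _.
by rewrite -scaler_suml hWcol scale1r.
Qed.

Definition tracking (s : state R n m p) := \sum_i st_y s i = \sum_i st_gprev s i.

Lemma sum_tracking_update (s : state R n m p) (g : 'I_n -> 'rV[R]_p) : tracking s ->
  \sum_i \sum_r W i r *: (st_y s r + g r - st_gprev s r) = \sum_i g i.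
Proof.
by move=> h; rewrite sum_mix !big_split /= sumrN h addrAC subrr add0r.
Qed.

Lemma tracking_step s d : tracking s -> tracking (step gradf W alpha s d).
Proof. exact: sum_tracking_update. Qed.

Lemma tracking_init x0 : tracking (init n m x0).
Proof. by rewrite /tracking /= !big1. Qed.

Lemma tracking_run x0 K (w : Omega n m K) k : tracking (run gradf W alpha x0 w k).
Proof.
rewrite /run; elim: (take _ _) (init n m x0) (tracking_init x0) => //= d ds IH s hs.
exact/IH/tracking_step.
Qed.

Lemma xbar_step s d : tracking s ->
  xbar (step gradf W alpha s d) =
  xbar s - alpha *: ((n%:R)^-1 *: \sum_i saga_g gradf s d i).
Proof.
move=> h; rewrite /xbar /= sum_mix big_split /= sumrN -scaler_sumr.
by rewrite sum_tracking_update // scalerDr scalerN !scalerA mulrC.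
Qed.

End GradientTracking.

Lemma sum_ord_cst (R : realType) (k : nat) (x : R) : \sum_(c < k) x = x * k%:R.
Proof. by rewrite sumr_const mulr_natr card_predT card_ord. Qed.

Lemma sum_ord_affine (R : realType) (k : nat) (F G : 'I_k -> R) (a b c : R) :
  \sum_(i < k) (a * F i + b * G i + c) = a * \sum_i F i + b * \sum_i G i + c * k%:R.
Proof. by rewrite !big_split /= -!mulr_sumr sum_ord_cst. Qed.

(* The two coefficient inequalities behind the contraction, in terms of
   M = m, N = n and q = alpha^2 L^2 with 8 M q <= N (and eta = 1/(2M)). *)
Lemma contraction_coef_table (R : realType) (M N q : R) :
  1 <= M -> 1 <= N -> 0 <= q -> q * (8 * M) <= N ->
  (1 + (2 * M)^-1) * (1 - M^-1) + 2 * q * (N ^+ 2)^-1 * N <= 1 - (4 * M)^-1.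
Proof.
move=> hM hN hq h8.
have M0 : 0 < M by apply: lt_le_trans ltr01 hM.
have N0 : 0 < N by apply: lt_le_trans ltr01 hN.
set a := M^-1; have ha : a * M = 1 by rewrite mulVf ?gt_eqF.
have a0 : 0 < a by rewrite invr_gt0.
set b := N^-1; have hb : b * N = 1 by rewrite mulVf ?gt_eqF.
have b0 : 0 < b by rewrite invr_gt0.
have -> : (2 * M)^-1 = a / 2 by rewrite invfM mulrC.
have -> : (4 * M)^-1 = a / 4 by rewrite invfM mulrC.
have -> : 2 * q * (N ^+ 2)^-1 * N = 2 * q * b * (b * N).
  by rewrite -exprVn -/b expr2; ring.
rewrite hb mulr1.
have hqb : q * b <= a / 8.
  have := ler_wpM2r (ltW (mulr_gt0 a0 b0)) h8.
  have -> : q * (8 * M) * (a * b) = 8 * (q * b) * (a * M) by ring.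
  have -> : N * (a * b) = a * (b * N) by ring.
  rewrite ha hb !mulr1; lra.
nra.
Qed.

Lemma contraction_coef_consensus (R : realType) (M N q : R) :
  1 <= M -> 1 <= N -> 0 <= q -> q * (8 * M) <= N ->
  (1 + (2 * M)^-1) * (M^-1 * N^-1) + 2 * q * (N ^+ 2)^-1 <= 9 / (4 * M * N).
Proof.
move=> hM hN hq h8.
have M0 : 0 < M by apply: lt_le_trans ltr01 hM.
have N0 : 0 < N by apply: lt_le_trans ltr01 hN.
set a := M^-1; have ha : a * M = 1 by rewrite mulVf ?gt_eqF.
have a0 : 0 < a by rewrite invr_gt0.
have a1 : a <= 1 by rewrite invf_le1.
set b := N^-1; have hb : b * N = 1 by rewrite mulVf ?gt_eqF.
have b0 : 0 < b by rewrite invr_gt0.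
have -> : (2 * M)^-1 = a / 2 by rewrite invfM mulrC.
have -> : 9 / (4 * M * N) = 9 / 4 * a * b by rewrite !invfM -/a -/b; ring.
have -> : 2 * q * (N ^+ 2)^-1 = 2 * (q * b) * b by rewrite -exprVn -/b expr2; ring.
have hqb : q * b <= a / 8.
  have := ler_wpM2r (ltW (mulr_gt0 a0 b0)) h8.
  have -> : q * (8 * M) * (a * b) = 8 * (q * b) * (a * M) by ring.
  have -> : N * (a * b) = a * (b * N) by ring.
  rewrite ha hb !mulr1; lra.
have := ler_wpM2r (ltW b0) hqb.
have : a * a * b <= a * b by rewrite ler_pM2r ?mulr_gt0 // ?ger_pMr.
nra.
Qed.

Lemma stepsize_sq (R : realType) (a L N M : R) :
  0 < a -> 0 < L -> 0 <= N -> 0 < M ->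
  a <= Num.sqrt N / (Num.sqrt M * L) -> a ^+ 2 * L ^+ 2 * M <= N.
Proof.
move=> ha hL hN hM h.
have hsM : 0 < Num.sqrt M by rewrite sqrtr_gt0.
have h1 : a * (Num.sqrt M * L) <= Num.sqrt N by rewrite -ler_pdivlMr ?mulr_gt0.
have h0 : 0 <= a * (Num.sqrt M * L) by rewrite ltW // !mulr_gt0.
have := ler_pM h0 h0 h1 h1.
rewrite -!expr2 sqr_sqrtr // !exprMn sqr_sqrtr ?(ltW hM) // => hsq.
by have -> : a ^+ 2 * L ^+ 2 * M = a ^+ 2 * (M * L ^+ 2) by ring.
Qed.

Section OneStep.
Variables (R : realType) (n m p : nat).
Variables (gradf : 'I_n -> 'I_m -> 'rV[R]_p -> 'rV[R]_p) (W : 'M[R]_n) (alpha L : R).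
Hypothesis hn : (0 < n)%N.
Hypothesis hm : (0 < m)%N.
Hypothesis hsmooth :
  forall i j x y, sqn (gradf i j x - gradf i j y) <= L ^+ 2 * sqn (x - y).
Hypothesis hWcol : forall r, \sum_(i < n) W i r = 1.
Variable s : state R n m p.
Hypothesis hs : tracking s.

Let card_idx : (0 < #|'I_m|)%N. Proof. by rewrite card_ord. Qed.
Let card_pair : (0 < #|{: 'I_m * 'I_m}|)%N.
Proof. by rewrite card_prod card_ord muln_gt0 hm. Qed.
Let card_draw : (0 < #|{: draw n m}|)%N.
Proof. by rewrite card_ffun expn_gt0 card_pair. Qed.
Let m_neq0 : (m%:R : R) != 0. Proof. by rewrite pnatr_eq0 -lt0n. Qed.
Let n_neq0 : (n%:R : R) != 0. Proof. by rewrite pnatr_eq0 -lt0n. Qed.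

Local Notation xb := (xbar s).

Definition grad_gap i (t : 'I_m) := gradf i t (st_x s i) - gradf i t (st_z s i t).
Definition table_avg i := (m%:R)^-1 *: \sum_(j < m) gradf i j (st_z s i j).
Definition saga_dir i (a : 'I_m * 'I_m) := grad_gap i a.1 + table_avg i.
Definition local_grad i := grad_fi gradf i (st_x s i).
Definition avg_grad := (n%:R)^-1 *: \sum_i local_grad i.
Definition avg_dir (d : draw n m) := (n%:R)^-1 *: \sum_i saga_dir i (d i).
(* xbar - z_{ij}^{k+1} when node i refreshes entry c of its table. *)
Definition anchor_gap i (j c : 'I_m) :=
  xb - (if j == c then st_x s i else st_z s i j).
Definition saga_noise i (a : 'I_m * 'I_m) := saga_dir i a - local_grad i.
(* The bound on the variance of the average SAGA direction. *)
Definition noise_bound := ((n%:R) ^+ 2)^-1 *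
  \sum_i (L ^+ 2 * ((m%:R)^-1 * \sum_t sqn (st_x s i - st_z s i t))).

Lemma saga_g_dir d i : saga_g gradf s d i = saga_dir i (d i).
Proof. by []. Qed.

Lemma saga_dir_unbiased i : EV (saga_dir i) = local_grad i.
Proof.
rewrite /saga_dir EVD EV_cst // EV_fst // EVE card_ord.
by rewrite /grad_gap sumrB scalerBr /table_avg /local_grad /grad_fi subrK.
Qed.

Lemma tk_step d : tk (step gradf W alpha s d) =
  (n%:R)^-1 * \sum_i ((m%:R)^-1 * \sum_j sqn (anchor_gap i j (d i).2 - alpha *: avg_dir d)).
Proof.
rewrite /tk xbar_step //; congr (_ * _); apply: eq_bigr => i _; congr (_ * _).
apply: eq_bigr => j _; congr sqn.
rewrite /anchor_gap /avg_dir /=.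
under [in RHS]eq_bigr do rewrite -saga_g_dir.
by rewrite addrAC.
Qed.

Lemma expect_anchor_gap i j :
  expect (fun d : draw n m => sqn (anchor_gap i j (d i).2)) =
  expect (fun c => sqn (anchor_gap i j c)).
Proof.
rewrite (expect_coord i (fun a => sqn (anchor_gap i j a.2))) //.
by rewrite (expect_snd (fun c => sqn (anchor_gap i j c))).
Qed.

(* The refreshed index s_i is independent of all the sampled gradients, so
   the cross term only sees the mean direction. *)
Lemma expect_anchor_cross i j :
  expect (fun d : draw n m => dot (anchor_gap i j (d i).2) (avg_dir d)) =
  dot (EV (anchor_gap i j)) avg_grad.
Proof.
transitivity ((n%:R)^-1 * \sum_r
    expect (fun d : draw n m => dot (anchor_gap i j (d i).2) (saga_dir r (d r)))).
  rewrite -expect_sum -expectZ; apply: expect_ext => d.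
  by rewrite /avg_dir dotZr dot_sumr.
rewrite /avg_grad dotZr dot_sumr; congr (_ * _); apply: eq_bigr => r _.
have EVgap : EV (fun a : 'I_m * 'I_m => anchor_gap i j a.2) = EV (anchor_gap i j).
  exact: EV_snd.
case: (eqVneq i r) => [<-|hir]; last first.
  by rewrite (expect_dot_coord2 (fun a => anchor_gap i j a.2) (saga_dir r)) // EVgap
             saga_dir_unbiased.
rewrite (expect_coord i (fun a => dot (anchor_gap i j a.2) (saga_dir i a))) //.
rewrite (expect_ext (Y := fun a =>
    dot (grad_gap i a.1) (anchor_gap i j a.2) + dot (anchor_gap i j a.2) (table_avg i))).
  rewrite expectD expect_dot_pair // -(dot_EV (fun a => anchor_gap i j a.2)) EVgap.
  rewrite -saga_dir_unbiased /saga_dir.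
  rewrite (EVD (fun a => grad_gap i a.1) (fun _ => table_avg i)) EV_cst // EV_fst //.
  by rewrite dotDr dotC.
by move=> a; rewrite dotDr dotC.
Qed.

Lemma saga_noise_mean0 i : EV (saga_noise i) = 0.
Proof.
rewrite /saga_noise (EVD (saga_dir i) (fun _ => - local_grad i)) EV_cst //.
by rewrite saga_dir_unbiased subrr.
Qed.

Lemma avg_dir_split d : avg_dir d = avg_grad + (n%:R)^-1 *: \sum_i saga_noise i (d i).
Proof. by rewrite /avg_dir /saga_noise /avg_grad sumrB scalerBr addrC subrK. Qed.

Lemma saga_noise_variance i : expect (fun a => sqn (saga_noise i a)) <=
  L ^+ 2 * ((m%:R)^-1 * \sum_t sqn (st_x s i - st_z s i t)).
Proof.
have -> : saga_noise i =
    fun a => grad_gap i a.1 - EV (fun b : 'I_m * 'I_m => grad_gap i b.1).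
  apply: funext => a; rewrite /saga_noise -saga_dir_unbiased /saga_dir.
  rewrite (EVD (fun a => grad_gap i a.1) (fun _ => table_avg i)) EV_cst //.
  by rewrite opprD addrACA subrr addr0.
apply: le_trans (variance_le (fun b : 'I_m * 'I_m => grad_gap i b.1) card_pair) _.
rewrite (expect_fst (fun t => sqn (grad_gap i t))) // expectE card_ord.
rewrite mulrCA ler_wpM2l ?invr_ge0 ?ler0n // mulr_sumr.
by apply: ler_sum => t _; apply: hsmooth.
Qed.

(* Second moment of the average direction: mean part plus independent noise. *)
Lemma avg_dir_second_moment :
  expect (fun d : draw n m => sqn (avg_dir d)) <= sqn avg_grad + noise_bound.
Proof.
pose noise (d : draw n m) := (n%:R)^-1 *: \sum_i saga_noise i (d i).
rewrite (expect_ext (Y := fun d => sqn avg_grad +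
    (2 * dot (noise d) avg_grad + sqn (noise d)))); last first.
  by move=> d; rewrite avg_dir_split sqnD dotC addrA.
rewrite !expectD expect_cst // expectZ -(dot_EV noise).
have -> : EV noise = 0.
  rewrite /noise EVZ (EV_sum (fun i (d : draw n m) => saga_noise i (d i))).
  by rewrite big1 ?scaler0 // => i _; rewrite (EV_coord i (saga_noise i)) // saga_noise_mean0.
rewrite dot0l mulr0 add0r lerD2l.
rewrite (expect_ext (Y := fun d : draw n m => ((n%:R) ^+ 2)^-1 *
    \sum_i \sum_r dot (saga_noise i (d i)) (saga_noise r (d r)))); last first.
  move=> d; rewrite /noise sqnZ sqn_dot dot_suml exprVn; congr (_ * _).
  by apply: eq_bigr => i _; rewrite dot_sumr.
rewrite expectZ /noise_bound ler_wpM2l ?invr_ge0 ?exprn_ge0 ?ler0n //.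
rewrite expect_sum; apply: ler_sum => i _.
rewrite expect_sum (bigD1 i) //= big1 ?addr0; last first.
  move=> r; rewrite eq_sym => hir.
  by rewrite (expect_dot_coord2 (saga_noise i) (saga_noise r)) // saga_noise_mean0 dot0l.
rewrite (expect_coord i (fun a => dot (saga_noise i a) (saga_noise i a))) //.
by apply: le_trans (saga_noise_variance i); apply: expect_le => a; rewrite sqn_dot.
Qed.

(* Averaging over the refreshed index: each table entry is replaced by x_i
   with probability 1/m. *)
Lemma anchor_refresh i : (m%:R)^-1 * \sum_j expect (fun c => sqn (anchor_gap i j c)) =
  (1 - (m%:R)^-1) * ((m%:R)^-1 * \sum_j sqn (xb - st_z s i j))
  + (m%:R)^-1 * sqn (xb - st_x s i).
Proof.
under eq_bigr do rewrite expectE card_ord.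
rewrite -mulr_sumr exchange_big /=.
have refresh c : \sum_j sqn (anchor_gap i j c) =
    \sum_j sqn (xb - st_z s i j) - sqn (xb - st_z s i c) + sqn (xb - st_x s i).
  rewrite (bigD1 c) //= [in RHS](bigD1 c) //= /anchor_gap eqxx.
  rewrite (eq_bigr (fun j => sqn (xb - st_z s i j))); last by move=> j /negbTE ->.
  by rewrite (addrC (sqn (xb - st_z s i c))) addrK addrC.
under eq_bigr do rewrite refresh.
by rewrite !big_split /= sumrN !sum_ord_cst; field.
Qed.

(* Expected new squared gap for one table entry, by Young's inequality with
   parameter eta on the cross term and Jensen on the mean gap. *)
Lemma expect_anchor_step i j (eta : R) : 0 < eta ->
  expect (fun d : draw n m => sqn (anchor_gap i j (d i).2 - alpha *: avg_dir d)) <=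
  (1 + eta) * expect (fun c => sqn (anchor_gap i j c))
  + ((eta^-1 + 1) * alpha ^+ 2 * sqn avg_grad + alpha ^+ 2 * noise_bound).
Proof.
move=> heta.
rewrite (expect_ext (Y := fun d : draw n m => sqn (anchor_gap i j (d i).2) +
   ((- 2 * alpha) * dot (anchor_gap i j (d i).2) (avg_dir d)
    + alpha ^+ 2 * sqn (avg_dir d)))); last first.
  by move=> d; rewrite sqnB dotZr sqnZ; ring.
rewrite !expectD expect_anchor_gap !expectZ expect_anchor_cross.
have hmoment := ler_wpM2l (sqr_ge0 alpha) avg_dir_second_moment.
have hyoung := young (EV (anchor_gap i j)) (- alpha *: avg_grad) heta.
rewrite dotZr sqnZ sqrrN in hyoung.
have hjensen := ler_wpM2l (ltW heta) (jensen_sqn (anchor_gap i j) card_idx).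
have hG := sqn_ge0 avg_grad.
have hinv : 0 < eta^-1 by rewrite invr_gt0.
set a := expect _ in hjensen *.
set b := expect _ in hmoment *.
set g := sqn avg_grad in hmoment hyoung hG *.
set c := dot _ _ in hyoung *.
set e := sqn (EV _) in hyoung hjensen.
rewrite mulrDr in hmoment.
nra.
Qed.

Lemma one_step_bound (eta : R) : 0 < eta ->
  expect (fun d : draw n m => tk (step gradf W alpha s d)) <=
  (1 + eta) * ((1 - (m%:R)^-1) * tk s + (m%:R)^-1 * ((n%:R)^-1 * consensus_err s))
  + ((eta^-1 + 1) * alpha ^+ 2 * sqn avg_grad + alpha ^+ 2 * noise_bound).
Proof.
move=> heta; rewrite (expect_ext tk_step) expectZ expect_sum.
set K := (_ + _ * noise_bound).
apply: (@le_trans _ _ ((n%:R)^-1 * \sum_i ((m%:R)^-1 *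
    \sum_j ((1 + eta) * expect (fun c => sqn (anchor_gap i j c)) + K)))).
  rewrite ler_wpM2l ?invr_ge0 ?ler0n //; apply: ler_sum => i _.
  rewrite expectZ expect_sum ler_wpM2l ?invr_ge0 ?ler0n //.
  by apply: ler_sum => j _; apply: expect_anchor_step.
rewrite le_eqVlt; apply/orP; left; apply/eqP.
have average_entry i :
    (m%:R)^-1 * \sum_j ((1 + eta) * expect (fun c => sqn (anchor_gap i j c)) + K)
    = ((1 + eta) * (1 - (m%:R)^-1)) * ((m%:R)^-1 * \sum_j sqn (xb - st_z s i j))
      + ((1 + eta) * (m%:R)^-1) * sqn (xb - st_x s i) + K.
  rewrite big_split /= -mulr_sumr sum_ord_cst mulrDr (mulrCA _ (1 + eta)).
  by rewrite anchor_refresh; field.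
under eq_bigr do rewrite average_entry.
rewrite sum_ord_affine.
have consensus_sym : consensus_err s = \sum_i sqn (xb - st_x s i).
  by apply: eq_bigr => i _; rewrite sqn_sym.
by rewrite consensus_sym /tk; field; rewrite n_neq0 m_neq0.
Qed.

(* The noise bound is controlled by the consensus and table errors, since
   |x_i - z_{it}|^2 <= 2|x_i - xbar|^2 + 2|xbar - z_{it}|^2. *)
Lemma noise_bound_le : noise_bound <=
  ((n%:R) ^+ 2)^-1 * (L ^+ 2 * (2 * consensus_err s + 2 * (n%:R * tk s))).
Proof.
rewrite /noise_bound ler_wpM2l ?invr_ge0 ?exprn_ge0 ?ler0n //.
rewrite -mulr_sumr ler_wpM2l ?sqr_ge0 //.
have -> : n%:R * tk s = \sum_i ((m%:R)^-1 * \sum_j sqn (xb - st_z s i j)).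
  by rewrite /tk mulrA mulfV // mul1r.
rewrite /consensus_err !mulr_sumr -big_split /=; apply: ler_sum => i _.
apply: (@le_trans _ _ ((m%:R)^-1 *
    \sum_t (2 * sqn (st_x s i - xb) + 2 * sqn (xb - st_z s i t)))).
  rewrite ler_wpM2l ?invr_ge0 ?ler0n //; apply: ler_sum => t _.
  have -> : st_x s i - st_z s i t = (st_x s i - xb) + (xb - st_z s i t).
    by rewrite addrA subrK.
  exact: sqnD_le.
rewrite le_eqVlt; apply/orP; left; apply/eqP.
by rewrite big_split /= -mulr_sumr sum_ord_cst -mulr_sumr; field.
Qed.

(* The contraction, for eta = 1/(2m) under the step-size condition. *)
Lemma one_step_contraction : alpha ^+ 2 * L ^+ 2 * (8 * m%:R) <= n%:R ->
  expect (fun d : draw n m => tk (step gradf W alpha s d)) <=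
  (1 - (4 * m%:R)^-1) * tk s + 4 * m%:R * alpha ^+ 2 * avg_grad_sq gradf s
  + 9 / (4 * m%:R * n%:R) * consensus_err s.
Proof.
move=> hstep; change (avg_grad_sq gradf s) with (sqn avg_grad).
have heta : 0 < (2 * m%:R : R)^-1 by rewrite invr_gt0 mulr_gt0 // ltr0n.
have hM : 1 <= (m%:R : R) by rewrite ler1n.
have hN : 1 <= (n%:R : R) by rewrite ler1n.
have hq : 0 <= alpha ^+ 2 * L ^+ 2 by rewrite mulr_ge0 ?sqr_ge0.
have hbound := one_step_bound heta; rewrite invrK in hbound.
have hT := ler_wpM2r (tk_ge0 s) (contraction_coef_table hM hN hq hstep).
have hC := ler_wpM2r (consensus_err_ge0 s) (contraction_coef_consensus hM hN hq hstep).
have hQ := ler_wpM2l (sqr_ge0 alpha) noise_bound_le.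
have hG : (2 * m%:R + 1) * alpha ^+ 2 * sqn avg_grad <= 4 * m%:R * alpha ^+ 2 * sqn avg_grad.
  have hG0 : 0 <= alpha ^+ 2 * sqn avg_grad by rewrite mulr_ge0 ?sqr_ge0 ?sqn_ge0.
  have h4 : 2 * m%:R + 1 <= 4 * m%:R :> R by lra.
  by have := ler_wpM2r hG0 h4; rewrite !mulrA.
set T := tk s in hbound hT hQ *; set C := consensus_err s in hbound hC hQ *.
set G := sqn avg_grad in hbound hG *.
nra.
Qed.

End OneStep.

Section FreshCoordinate.
Variables (R : realType) (D : finType) (K k : nat) (kk : 'I_K).
Hypothesis hkk : (k <= kk)%N.
Variable A : {ffun 'I_K -> D} -> bool.
Hypothesis hA : Fk_meas k A.

(* Every value of the coordinate kk is equally frequent on an F^k-event A: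
   swapping two values at coordinate kk is a bijection preserving A. *)
Lemma fresh_coord_count (d d' : D) :
  \sum_(w : {ffun 'I_K -> D}) ((A w) && (w kk == d))%:R =
  \sum_(w : {ffun 'I_K -> D}) ((A w) && (w kk == d'))%:R :> R.
Proof.
pose sw (x : D) := if x == d then d' else if x == d' then d else x.
have swK : involutive sw.
  move=> x; rewrite /sw.
  case: (eqVneq x d) => [->|hxd]; first by rewrite eqxx; case: eqVneq.
  case: (eqVneq x d') => [->|hxd']; first by rewrite eqxx.
  by rewrite (negbTE hxd) (negbTE hxd').
have sw_d' : sw d' = d by rewrite /sw; case: (eqVneq d' d) => [->|_]; rewrite ?eqxx.
pose sg (w : {ffun 'I_K -> D}) : {ffun 'I_K -> D} :=
  [ffun t => if t == kk then sw (w t) else w t].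
have sgK : involutive sg.
  by move=> w; apply/ffunP => t; rewrite !ffunE; case: (t == kk); rewrite ?swK.
rewrite (reindex_inj (inv_inj sgK)); apply: eq_bigr => w _.
have -> : A (sg w) = A w.
  apply: hA => t ht; rewrite ffunE; case: eqP => // e.
  by move: ht; rewrite e ltnNge hkk.
by rewrite ffunE eqxx -[in sw _ == d]sw_d' (inj_eq (inv_inj swK)).
Qed.

Lemma fresh_coord_average (phi : D -> R) : (0 < #|D|)%N ->
  \sum_(w : {ffun 'I_K -> D}) phi (w kk) * (A w)%:R =
  (\sum_(w : {ffun 'I_K -> D}) ((A w)%:R : R)) * expect phi.
Proof.
move=> hD; case/card_gt0P: (hD) => d0 _.
pose N d : R := \sum_(w : {ffun 'I_K -> D}) ((A w) && (w kk == d))%:R.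
have sum_by_value (F : D -> R) :
    \sum_(w : {ffun 'I_K -> D}) F (w kk) * (A w)%:R = \sum_d F d * N d.
  under [RHS]eq_bigr do rewrite /N mulr_sumr.
  rewrite [RHS]exchange_big /=; apply: eq_bigr => w _.
  rewrite (bigD1 (w kk)) //= eqxx andbT big1 ?addr0 // => d hd.
  by rewrite eq_sym (negbTE hd) andbF mulr0.
have hN d : N d = N d0 by apply: fresh_coord_count.
have -> : \sum_(w : {ffun 'I_K -> D}) ((A w)%:R : R) = \sum_d 1 * N d.
  by rewrite -sum_by_value; apply: eq_bigr => w _; rewrite mul1r.
rewrite sum_by_value expectE.
under eq_bigr do rewrite hN.
under [X in _ = X * _]eq_bigr do rewrite hN mul1r.
rewrite -mulr_suml sumr_const card_predT -mulr_natr.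
by field; rewrite pnatr_eq0 -lt0n.
Qed.

End FreshCoordinate.

Lemma cond_exp_fresh (R : realType) (D : finType) (K k : nat) (kk : 'I_K)
    (hkk : (k <= kk)%N) (F : {ffun 'I_K -> D} -> D -> R)
    (hF : forall d, Fk_meas k (F^~ d)) (X Y : {ffun 'I_K -> D} -> R)
    (hX : forall w, X w = F w (w kk)) :
  is_cond_exp k X Y -> forall w, Y w = expect (F w).
Proof.
case=> hYm hYA w.
pose A w' := [forall t : 'I_K, (t < k)%N ==> (w' t == w t)].
have agreeA w' : A w' -> forall t : 'I_K, (t < k)%N -> w' t = w t.
  by move=> /forallP h t ht; move/implyP: (h t) => /(_ ht) /eqP.
have hAm : Fk_meas k A.
  by move=> w1 w2 h; apply: eq_forallb => t; case ht: (t < k)%N => //=; rewrite h.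
have hAw : A w by apply/forallP => t; apply/implyP.
have hD : (0 < #|D|)%N by apply/card_gt0P; exists (w kk).
have hT : (#|{: {ffun 'I_K -> D}}|%:R : R)^-1 != 0.
  by rewrite invr_eq0 pnatr_eq0 -lt0n; apply/card_gt0P; exists w.
have hXY : \sum_(w' : {ffun 'I_K -> D}) X w' * (A w')%:R =
           \sum_(w' : {ffun 'I_K -> D}) Y w' * (A w')%:R.
  by have := hYA A hAm; rewrite !expectE => /(mulfI hT).
have sumX : \sum_(w' : {ffun 'I_K -> D}) X w' * (A w')%:R =
            \sum_(w' : {ffun 'I_K -> D}) F w (w' kk) * (A w')%:R.
  apply: eq_bigr => w' _; case hA: (A w'); last by rewrite !mulr0.
  by rewrite hX (hF (w' kk) w' w (agreeA w' hA)).
have sumY : \sum_(w' : {ffun 'I_K -> D}) Y w' * (A w')%:R =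
            Y w * \sum_(w' : {ffun 'I_K -> D}) ((A w')%:R : R).
  rewrite mulr_sumr; apply: eq_bigr => w' _; case hA: (A w'); last by rewrite !mulr0.
  by rewrite (hYm w' w (agreeA w' hA)).
have sizeA : 0 < \sum_(w' : {ffun 'I_K -> D}) ((A w')%:R : R).
  rewrite (bigD1 w) //= hAw ltr_pwDl ?ltr01 //.
  by rewrite sumr_ge0 // => w' _; rewrite ler0n.
apply: (mulIf (lt0r_neq0 sizeA)).
by rewrite -sumY -hXY sumX (fresh_coord_average hkk hAm) // mulrC.
Qed.

Lemma run_succ (R : realType) (n m p : nat) gradf (W : 'M[R]_n) (alpha : R) x0 K
    (w : Omega n m K) k (hk : (k < K)%N) :
  run (p:=p) gradf W alpha x0 w k.+1 =
  step gradf W alpha (run gradf W alpha x0 w k) (w (Ordinal hk)).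
Proof.
rewrite /run (take_nth (w (Ordinal hk))); last by rewrite size_map size_enum_ord.
rewrite -cats1 foldl_cat /=.
congr (step _ _ _ _ _); rewrite (nth_map (Ordinal hk)) ?size_enum_ord //.
by congr (w _); apply: val_inj => /=; rewrite nth_enum_ord.
Qed.

Lemma run_meas (R : realType) (n m p : nat) gradf (W : 'M[R]_n) (alpha : R) x0 K k :
  Fk_meas k (fun w : Omega n m K => run (p:=p) gradf W alpha x0 w k).
Proof.
move=> w w' h; rewrite /run -(map_take k (fun t => w t)) -(map_take k (fun t => w' t)).
congr (foldl _ _ _); apply/eq_in_map => t ht.
by apply: h; have := index_ltn ht; rewrite index_enum_ord.
Qed.

Lemma cond_exp_run (R : realType) (n m p : nat) gradf (W : 'M[R]_n) (alpha : R) x0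
    (K k : nat) (hk : (k < K)%N) (phi : state R n m p -> R) (Y : Omega n m K -> R) :
  is_cond_exp k (fun w => phi (run gradf W alpha x0 w k.+1)) Y ->
  forall w, Y w = expect (fun d : draw n m =>
                   phi (step gradf W alpha (run gradf W alpha x0 w k) d)).
Proof.
apply: (cond_exp_fresh (kk := Ordinal hk)) => // [d w w' h|w].
  by congr (phi (step _ _ _ _ d)); apply: run_meas.
by rewrite run_succ.
Qed.

Theorem corollary1 (R : realType) (n m p : nat)
  (hn : (0 < n)%N) (hm : (0 < m)%N) (hp : (0 < p)%N)
  (f : 'I_n -> 'I_m -> 'rV[R]_p -> R)
  (gradf : 'I_n -> 'I_m -> 'rV[R]_p -> 'rV[R]_p)
  (L : R) (hL : 0 < L)
  (hdiff : forall i j (x : 'rV[R]_p), differentiable (f i j) x /\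
     forall v : 'rV[R]_p, 'd (f i j) x v = \sum_(l < p) gradf i j x 0 l * v 0 l)
  (hsmooth : forall i j (x y : 'rV[R]_p),
     enorm (gradf i j x - gradf i j y) <= L * enorm (x - y))
  (hFbdd : exists c : R, forall x : 'rV[R]_p,
     c <= (n%:R)^-1 * \sum_(i < n) ((m%:R)^-1 * \sum_(j < m) f i j x))
  (W : 'M[R]_n)
  (hWnn : forall i j, 0 <= W i j)
  (hWprim : exists q : nat, forall i j, 0 < (W ^+ q) i j)
  (hWrow : forall i, \sum_(r < n) W i r = 1)
  (hWcol : forall r, \sum_(i < n) W i r = 1)
  (x0 : 'rV[R]_p) (alpha : R)
  (halpha : 0 < alpha)
  (halpha2 : alpha <= Num.sqrt (n%:R) / (Num.sqrt (8 * m%:R) * L))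
  (k K : nat) (hkK : (k < K)%N)
  (Y : Omega n m K -> R)
  (hY : is_cond_exp k
          (fun w : Omega n m K => tk (run gradf W alpha x0 w k.+1)) Y) :
  forall w : Omega n m K,
    Y w <= (1 - (4 * m%:R)^-1) * tk (run gradf W alpha x0 w k)
           + 4 * m%:R * alpha ^+ 2 * avg_grad_sq gradf (run gradf W alpha x0 w k)
           + 9 / (4 * m%:R * n%:R) * consensus_err (run gradf W alpha x0 w k).
Proof.
move=> w; rewrite (cond_exp_run hkK hY w).
have hsmooth_sq i j x y : sqn (gradf i j x - gradf i j y) <= L ^+ 2 * sqn (x - y).
  exact/sqn_lipschitz/hsmooth.
have hstep : alpha ^+ 2 * L ^+ 2 * (8 * m%:R) <= n%:R.
  by apply: stepsize_sq => //; rewrite mulr_gt0 // ltr0n.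
apply: (one_step_contraction hn hm hsmooth_sq hWcol _ hstep).
exact: tracking_run.
Qed.
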